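(* Let $n\ge 3$ be odd and consider the path $P_n$ with vertices $u_1,\dots,u_n$ and edges $\{u_j,u_{j+1}\}$, $1\le j\le n-1$. Let $\alpha\neq0$ be real, give the edge $\{u_1,u_2\}$ weight $1/\alpha$ and all other edges weight $1$. If $|\alpha|>\sqrt{(n-1)/2}$, then the end vertex $u_1$ is sedentary.
   Context: For a weighted graph with weighted adjacency matrix $A$ (entries equal to edge weights, $0$ for non-adjacent pairs), the transition matrix is $U(t)=e^{itA}$. A vertex $u$ is sedentary if $\inf_{t>0}|U(t)_{u,u}|\ge C$ for some constant $0<C\le1$. *)

From HB Require Import structures.
From mathcomp Require Import all_boot all_order all_algebra.
From mathcomp Require Import all_classical all_reals all_analysis.
Set Implicit Arguments. Unset Strict Implicit. Unset Printing Implicit Defensive.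
Import Order.TTheory GRing.Theory Num.Theory.
Import numFieldNormedType.Exports.
Local Open Scope ring_scope.

Section Defs.
Variable R : realType.

Definition mxpow (n : nat) (A : 'M[R]_n) (k : nat) : 'M[R]_n :=
  iter k (mulmx A) 1%:M.

(* U(t) = e^{itA} = \sum_k (i t)^k / k! A^k.  Since A is real, the entry
   U(t)_{u,v} is the complex number  Ure + i Uim  where, using
   i^k = (-1)^(k/2) for k even and i^k = i (-1)^((k-1)/2) for k odd: *)
Definition Ure (n : nat) (A : 'M[R]_n) (t : R) (u v : 'I_n) : R :=
  limn (series (fun k : nat =>
     (if odd k then 0 else (-1) ^+ k./2 * t ^+ k / (k`!)%:R * mxpow A k u v))).

Definition Uim (n : nat) (A : 'M[R]_n) (t : R) (u v : 'I_n) : R :=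
  limn (series (fun k : nat =>
     (if odd k then (-1) ^+ k./2 * t ^+ k / (k`!)%:R * mxpow A k u v else 0))).

Definition Uabs (n : nat) (A : 'M[R]_n) (t : R) (u v : 'I_n) : R :=
  Num.sqrt (Ure A t u v ^+ 2 + Uim A t u v ^+ 2).

Definition sedentary (n : nat) (A : 'M[R]_n) (u : 'I_n) : Prop :=
  exists C : R, 0 < C /\ C <= 1 /\ forall t : R, 0 < t -> C <= Uabs A t u u.

(* weighted path P_n on vertices 0..n-1 (vertex i = u_{i+1}); edge {u_1,u_2}
   has weight 1/alpha, all other edges weight 1 *)
Definition path_weighted (n : nat) (alpha : R) : 'M[R]_n :=
  \matrix_(i < n, j < n)
    if (i.+1 == j :> nat) || (j.+1 == i :> nat) then
      (if ((i : nat) == 0%N) || ((j : nat) == 0%N) then alpha^-1 else 1)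
    else 0.
End Defs.

From HB Require Import structures.
From mathcomp Require Import all_boot all_order all_algebra.
From mathcomp Require Import all_classical all_reals all_analysis.
From mathcomp Require Import ring lra zify.
Set Implicit Arguments. Unset Strict Implicit. Unset Printing Implicit Defensive.
Import Order.TTheory GRing.Theory Num.Theory.
Import numFieldNormedType.Exports.
Local Open Scope ring_scope.

(* For a real symmetric A, each column of U(t) = e^{itA} has unit norm, so the
   real parts X_i = Re U(t)_{i,u} satisfy sum_i X_i^2 <= 1.  A left kernel
   vector x of A is fixed by U(t); if x_u = 1 this gives 1 = sum_i x_i X_i, i.e.
   1 - X_u = sum_i (x_i - [i = u]) X_i <= (m + 1) / 2 with
   m = sum_i (x_i - [i = u])^2, whence |U(t)_{u,u}| >= X_u >= (1 - m) / 2.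
   On the odd path the kernel vector x_{2q} = (-1)^q / alpha (q >= 1), x_0 = 1,
   x_odd = 0 has m = ((n - 1) / 2) / alpha^2, which is < 1 exactly when
   |alpha| > sqrt((n - 1) / 2). *)

Section ExponentialSeries.
Variables (R : realType) (B : R).
Hypothesis B_ge0 : 0 <= B.

Lemma lim_series_head (f : nat -> R) :
  (forall k, (0 < k)%N -> f k = 0) -> limn (series f) = f 0%N.
Proof.
move=> f0; apply: cvg_lim => //; apply: cvg_near_cst; near=> N.
have N_gt0 : (0 < N)%N by near: N; exists 1%N.
rewrite /series /= -(prednK N_gt0) big_nat_recl // big1 ?addr0 // => k _.
exact: f0.
Unshelve. all: by end_near. Qed.

Definition egf (b : nat -> R) (x : R) : R :=
  limn (pseries (fun k => b k / k`!%:R) x).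

Lemma is_cvg_egf (b : nat -> R) (M x : R) :
  (forall k, `|b k| <= M * B ^+ k) -> cvgn (pseries (fun k => b k / k`!%:R) x).
Proof.
move=> hb; have M_ge0 : 0 <= M.
  by have := hb 0%N; rewrite expr0 mulr1; apply: le_trans.
apply: normed_cvg.
apply: (@series_le_cvg R _ (fun k => M * exp_coeff (B * `|x|) k)).
- by move=> k; apply: normr_ge0.
- by move=> k; rewrite /exp_coeff /= mulr_ge0 // divr_ge0 // exprn_ge0 // mulr_ge0.
- move=> k; rewrite /exp_coeff /= !normrM normfV normrX [`|k`!%:R|]ger0_norm //.
  rewrite [X in _ <= X](_ : _ = M * B ^+ k * (`|x| ^+ k / k`!%:R)); last first.
    by rewrite exprMn !mulrA.
  by rewrite mulrAC -mulrA ler_wpM2r ?divr_ge0 ?exprn_ge0.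
- by have := is_cvg_seriesZ (k := M) (is_cvg_series_exp_coeff (B * `|x|)).
Qed.

Lemma is_derive_egf (b : nat -> R) (M x : R) :
  (forall k, `|b k| <= M * B ^+ k) ->
  is_derive x (1 : R) (egf b) (egf (fun k => b k.+1) x).
Proof.
move=> hb.
have diffsE c : pseries_diffs (fun k => c k / k`!%:R) = (fun k => c k.+1 / k`!%:R).
  apply/funext => k; rewrite /pseries_diffs factS natrM invfM.
  by rewrite mulrCA mulVKf // pnatr_eq0.
rewrite /egf -diffsE; apply: (@pseries_snd_diffs _ _ (`|x| + 1)).
- exact: is_cvg_egf hb.
- rewrite diffsE; apply: (@is_cvg_egf _ (M * B)) => k.
  by rewrite -mulrA -exprS.
- rewrite !diffsE; apply: (@is_cvg_egf _ (M * B * B)) => k.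
  by rewrite -!mulrA -!exprS.
- by rewrite [X in _ < X]ger0_norm ?ltrDl // addr_ge0.
Qed.

Lemma egf_sum m (a : 'I_m -> R) (c : 'I_m -> nat -> R) (M x : R) :
  (forall l k, `|c l k| <= M * B ^+ k) ->
  egf (fun k => \sum_l a l * c l k) x = \sum_l a l * egf (c l) x.
Proof.
move=> hc; apply: cvg_lim => //.
have -> : pseries (fun k => (\sum_l a l * c l k) / k`!%:R) x =
          (fun N => \sum_l a l * pseries (fun k => c l k / k`!%:R) x N).
  apply/funext => N; rewrite /pseries /series /=.
  under eq_bigr do rewrite !mulr_suml.
  rewrite exchange_big; apply: eq_bigr => l _; rewrite mulr_sumr.
  by apply: eq_bigr => k _; rewrite !mulrA.
apply: (cvg_big add_continuous) => // l _.
by apply: cvgMl_tmp; exact: is_cvg_egf (hc l).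
Qed.

Lemma egf_head (b : nat -> R) (x : R) :
  (forall k, (0 < k)%N -> b k = 0) -> egf b x = b 0%N.
Proof.
move=> b0; rewrite /egf /pseries lim_series_head /=.
  by rewrite fact0 divr1 mulr1.
by move=> k /b0 ->; rewrite !mul0r.
Qed.

Lemma egf_at0 (b : nat -> R) : egf b 0 = b 0%N.
Proof.
rewrite /egf /pseries lim_series_head /=; first by rewrite fact0 divr1 mulr1.
by move=> k k_gt0; rewrite expr0n gtn_eqF // mulr0.
Qed.

End ExponentialSeries.

Section Propagator.
Variables (R : realType) (n : nat) (A : 'M[R]_n).

Definition Ure_coef (i j : 'I_n) (k : nat) : R :=
  if odd k then 0 else (-1) ^+ k./2 * mxpow A k i j.

Definition Uim_coef (i j : 'I_n) (k : nat) : R :=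
  if odd k then (-1) ^+ k./2 * mxpow A k i j else 0.

Lemma UreE t i j : Ure A t i j = egf (Ure_coef i j) t.
Proof.
rewrite /Ure /egf /pseries; congr (limn (series _)); apply/funext => k /=.
by rewrite /Ure_coef; case: odd; rewrite ?mul0r //; ring.
Qed.

Lemma UimE t i j : Uim A t i j = egf (Uim_coef i j) t.
Proof.
rewrite /Uim /egf /pseries; congr (limn (series _)); apply/funext => k /=.
by rewrite /Uim_coef; case: odd; rewrite ?mul0r //; ring.
Qed.

Lemma mxpowS k i j : mxpow A k.+1 i j = \sum_l A i l * mxpow A k l j.
Proof. by rewrite /mxpow iterS mxE. Qed.

Definition mx_abs_sum : R := \sum_i \sum_j `|A i j|.

Lemma mx_abs_sum_ge0 : 0 <= mx_abs_sum.
Proof. by apply: sumr_ge0 => i _; apply: sumr_ge0. Qed.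

Lemma mxpow_bound k i j : `|mxpow A k i j| <= mx_abs_sum ^+ k.
Proof.
elim: k i j => [|k IHk] i j.
  by rewrite /mxpow /= mxE expr0; case: eqP; rewrite ?normr1 ?normr0.
rewrite mxpowS exprS; apply: le_trans (ler_norm_sum _ _ _) _.
apply: le_trans (_ : \sum_l `|A i l| * mx_abs_sum ^+ k <= _).
  by apply: ler_sum => l _; rewrite normrM ler_wpM2l.
rewrite -mulr_suml ler_wpM2r ?exprn_ge0 ?mx_abs_sum_ge0 //.
rewrite [leRHS](bigD1 i) //= lerDl.
by apply: sumr_ge0 => i' _; apply: sumr_ge0.
Qed.

Lemma Ure_coef_bound i j k : `|Ure_coef i j k| <= 1 * mx_abs_sum ^+ k.
Proof.
rewrite mul1r /Ure_coef; case: odd; first by rewrite normr0 exprn_ge0 ?mx_abs_sum_ge0.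
by rewrite normrM normrX normrN1 expr1n mul1r mxpow_bound.
Qed.

Lemma Uim_coef_bound i j k : `|Uim_coef i j k| <= 1 * mx_abs_sum ^+ k.
Proof.
rewrite mul1r /Uim_coef; case: odd; last by rewrite normr0 exprn_ge0 ?mx_abs_sum_ge0.
by rewrite normrM normrX normrN1 expr1n mul1r mxpow_bound.
Qed.

Lemma Ure_coefS i j k : Ure_coef i j k.+1 = \sum_l - A i l * Uim_coef l j k.
Proof.
rewrite /Ure_coef /Uim_coef /=; case: (boolP (odd k)) => k_odd /=.
  rewrite mxpowS uphalf_half k_odd exprS mulN1r mulNr mulr_sumr -sumrN.
  by apply: eq_bigr => l _; rewrite mulrCA mulNr.
by rewrite big1 // => l _; rewrite mulr0.
Qed.

Lemma Uim_coefS i j k : Uim_coef i j k.+1 = \sum_l A i l * Ure_coef l j k.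
Proof.
rewrite /Ure_coef /Uim_coef /=; case: (boolP (odd k)) => k_odd /=.
  by rewrite big1 // => l _; rewrite mulr0.
rewrite mxpowS uphalf_half (negPf k_odd) add0n mulr_sumr.
by apply: eq_bigr => l _; rewrite mulrCA.
Qed.

Lemma is_derive_Ure i j t :
  is_derive t (1 : R) (fun s => Ure A s i j) (\sum_l - A i l * Uim A t l j).
Proof.
have -> : (fun s => Ure A s i j) = egf (Ure_coef i j) by apply/funext => s; rewrite UreE.
have -> : \sum_l - A i l * Uim A t l j = egf (fun k => Ure_coef i j k.+1) t.
  under eq_bigr do rewrite UimE.
  rewrite -(egf_sum mx_abs_sum_ge0 _ t (fun l => Uim_coef_bound l j)).
  by congr egf; apply/funext => k; rewrite Ure_coefS.
exact: (is_derive_egf mx_abs_sum_ge0 t (Ure_coef_bound i j)).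
Qed.

Lemma is_derive_Uim i j t :
  is_derive t (1 : R) (fun s => Uim A s i j) (\sum_l A i l * Ure A t l j).
Proof.
have -> : (fun s => Uim A s i j) = egf (Uim_coef i j) by apply/funext => s; rewrite UimE.
have -> : \sum_l A i l * Ure A t l j = egf (fun k => Uim_coef i j k.+1) t.
  under eq_bigr do rewrite UreE.
  rewrite -(egf_sum mx_abs_sum_ge0 _ t (fun l => Ure_coef_bound l j)).
  by congr egf; apply/funext => k; rewrite Uim_coefS.
exact: (is_derive_egf mx_abs_sum_ge0 t (Uim_coef_bound i j)).
Qed.

Lemma Ure0 i j : Ure A 0 i j = (i == j)%:R.
Proof. by rewrite UreE egf_at0 /Ure_coef /= mul1r /mxpow /= mxE. Qed.

Lemma Uim0 i j : Uim A 0 i j = 0.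
Proof. by rewrite UimE egf_at0. Qed.

Lemma Ure_le_Uabs t i j : Ure A t i j <= Uabs A t i j.
Proof.
rewrite /Uabs (le_trans (ler_norm _)) // -sqrtr_sqr.
by rewrite ler_wsqrtr // lerDl sqr_ge0.
Qed.

Lemma left_kernel_mxpow (x : 'I_n -> R) k j :
  (forall l, \sum_i x i * A i l = 0) -> \sum_i x i * mxpow A k.+1 i j = 0.
Proof.
move=> xA0; under eq_bigr do rewrite mxpowS mulr_sumr.
rewrite exchange_big big1 // => l _.
by under eq_bigr do rewrite mulrA; rewrite -mulr_suml xA0 mul0r.
Qed.

Lemma left_kernel_Ure (x : 'I_n -> R) j t :
  (forall l, \sum_i x i * A i l = 0) -> \sum_i x i * Ure A t i j = x j.
Proof.
move=> xA0; under eq_bigr do rewrite UreE.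
rewrite -(egf_sum mx_abs_sum_ge0 _ t (fun i => Ure_coef_bound i j)) egf_head.
  rewrite (bigD1 j) //= big1 ?addr0 => [|i /negPf ji];
    by rewrite /Ure_coef /= mul1r /mxpow /= mxE ?eqxx ?ji ?mulr1 ?mulr0.
case=> [|k] // _; rewrite /Ure_coef; case: odd.
  by rewrite big1 // => i _; rewrite mulr0.
by under eq_bigr do rewrite mulrCA; rewrite -mulr_sumr left_kernel_mxpow ?mulr0.
Qed.

End Propagator.

Section SymmetricPropagator.
Variables (R : realType) (n : nat) (A : 'M[R]_n).
Hypothesis A_sym : forall i j, A i j = A j i.

Lemma sum_sqr_Ure_Uim j t : \sum_i (Ure A t i j ^+ 2 + Uim A t i j ^+ 2) = 1.
Proof.
pose h i := (fun s => Ure A s i j) ^+ 2 + (fun s => Uim A s i j) ^+ 2.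
have hE s : \sum_i (Ure A s i j ^+ 2 + Uim A s i j ^+ 2) = (\sum_i h i) s.
  by rewrite fct_sumE.
have h'0 s : is_derive s (1 : R) (\sum_i h i) 0.
  apply: is_derive_eq.
    apply: is_derive_sum => i; apply: is_deriveD; apply: is_deriveX.
      exact: is_derive_Ure.
    exact: is_derive_Uim.
  rewrite big_split /=; under eq_bigr do rewrite scaler_sumr.
  under [X in _ + X]eq_bigr do rewrite scaler_sumr.
  rewrite [X in _ + X]exchange_big -big_split /=; apply: big1 => i _.
  rewrite -big_split /=; apply: big1 => l _.
  by rewrite (A_sym l i) /GRing.scale /= !expr1; ring.
rewrite hE (is_derive_0_is_cst t 0 h'0) -hE (bigD1 j) //= Ure0 Uim0 eqxx.
rewrite big1 => [|i /negPf ij]; last by rewrite Ure0 Uim0 ij expr0n addr0.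
by rewrite expr1n expr0n !addr0.
Qed.

Lemma Ure_diag_ge (x : 'I_n -> R) u t :
  (forall l, \sum_i x i * A i l = 0) -> x u = 1 ->
  (1 - \sum_i (x i - (i == u)%:R) ^+ 2) / 2 <= Ure A t u u.
Proof.
move=> xA0 xu1; set m := \sum_i _; set X := fun i => Ure A t i u.
rewrite -/(X u).
have X_norm : \sum_i X i ^+ 2 <= 1.
  by rewrite -(sum_sqr_Ure_Uim u t) ler_sum // => i _; rewrite lerDl sqr_ge0.
have X_dist : 1 - X u = \sum_i (x i - (i == u)%:R) * X i.
  under eq_bigr do rewrite mulrBl.
  rewrite sumrB left_kernel_Ure // xu1 (bigD1 u) //= eqxx mul1r big1 ?addr0 //.
  by move=> i /negPf ->; rewrite mul0r.
have : (1 - X u) *+ 2 <= m + \sum_i X i ^+ 2.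
  rewrite X_dist -sumrMnl -big_split ler_sum // => i _.
  exact: leif_mean_square_scaled.
rewrite mulr2n; lra.
Qed.

Lemma sedentary_left_kernel (x : 'I_n -> R) u :
  (forall l, \sum_i x i * A i l = 0) -> x u = 1 ->
  \sum_i (x i - (i == u)%:R) ^+ 2 < 1 -> sedentary A u.
Proof.
move=> xA0 xu1; set m := \sum_i _ => m_lt1.
have m_ge0 : 0 <= m by apply: sumr_ge0 => i _; apply: sqr_ge0.
exists ((1 - m) / 2); split; first lra.
split; first lra.
by move=> t _; apply: le_trans (Ure_diag_ge t xA0 xu1) (Ure_le_Uabs _ _ _ _).
Qed.

End SymmetricPropagator.

Section WeightedPath.
Variables (R : realType) (n : nat) (alpha : R).
Local Notation P := (path_weighted n alpha).

Lemma path_weighted_sym i j : P i j = P j i.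
Proof. by rewrite !mxE (orbC (j.+1 == i :> nat)) (orbC (j == 0%N :> nat)). Qed.

Lemma path_weighted_eq0 (i j : 'I_n) :
  (i.+1 != j :> nat) && (j.+1 != i :> nat) -> P i j = 0.
Proof. by rewrite mxE -negb_or => /negPf ->. Qed.

Lemma sum_path_weighted_col (y : nat -> R) (l : 'I_n) :
  (0 < l)%N -> (l.+1 < n)%N ->
  \sum_(i < n) y i * P i l = y l.-1 * (if l.-1 == 0%N then alpha^-1 else 1) + y l.+1.
Proof.
move=> l_gt0 l1_lt_n.
have lm1_lt_n : (l.-1 < n)%N by rewrite (leq_ltn_trans (leq_pred l)).
pose il := Ordinal lm1_lt_n; pose ir := Ordinal l1_lt_n.
have ir_neq_il : ir != il by rewrite -val_eqE /=; lia.
rewrite (bigD1 il) //= (bigD1 ir) //= big1 ?addr0 => [|i /andP[i_neq_il i_neq_ir]].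
  by rewrite !mxE /= prednK // eqxx /= (gtn_eqF l_gt0) /= eqxx orbT orbF mulr1.
rewrite path_weighted_eq0 ?mulr0 //.
by move: i_neq_il i_neq_ir; rewrite -!val_eqE /=; lia.
Qed.

Definition path_kernel (k : nat) : R :=
  if odd k then 0 else if k == 0%N then 1 else (-1) ^+ k./2 / alpha.

Hypothesis n_odd : odd n.

Lemma path_kernel_left l : \sum_(i < n) path_kernel i * P i l = 0.
Proof.
have [l_odd | l_even] := boolP (odd l); last first.
  apply: big1 => i _; rewrite /path_kernel.
  have [i_odd | i_even] := boolP (odd i); first by rewrite mul0r.
  rewrite path_weighted_eq0 ?mulr0 //; apply/andP; split; apply/eqP => e.
    by move: l_even; rewrite -e /= (negPf i_even).
  by move: i_even; rewrite -e /= (negPf l_even).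
have [q lE] : exists q, nat_of_ord l = q.*2.+1.
  by exists l./2; rewrite -[in LHS](odd_double_half l) l_odd.
have l1_lt_n : (l.+1 < n)%N.
  by rewrite ltn_neqAle ltn_ord andbT; apply: contraTneq n_odd => <- /=; rewrite l_odd.
rewrite sum_path_weighted_col ?lE //; last by rewrite -lE.
rewrite /path_kernel /= negbK odd_double doubleK.
case: q {lE} => [|q] /=; first by rewrite expr1 mulN1r mul1r addrN.
by rewrite mulr1 [(-1) ^+ q.+2]exprS mulN1r mulNr addrN.
Qed.

Hypothesis alpha_neq0 : alpha != 0.

Lemma path_kernel_dist p :
  \sum_(0 <= k < p.*2.+1) (path_kernel k - (k == 0%N)%:R) ^+ 2 = p%:R / alpha ^+ 2.
Proof.
elim: p => [|p IHp]; first by rewrite big_nat1 /path_kernel /= subrr expr0n mul0r.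
rewrite doubleS big_nat_recr //= big_nat_recr //= IHp.
rewrite /path_kernel /= odd_double /= doubleK.
rewrite !subr0 expr0n addr0 exprMn sqrr_sign mul1r exprVn -natr1.
by field.
Qed.

End WeightedPath.

Theorem proposition22 (R : realType) (n : nat) (hn : (3 <= n)%N) (hodd : odd n)
  (alpha : R) (halpha0 : alpha != 0)
  (halpha : Num.sqrt ((n.-1)%:R / 2) < `|alpha|)
  (u1 : 'I_n) (hu1 : nat_of_ord u1 = 0%N) :
  sedentary (path_weighted n alpha) u1.
Proof.
have [p n_eq] : exists p, n = p.*2.+1.
  by exists n./2; rewrite -[in LHS](odd_double_half n) hodd.
have alpha2_gt0 : 0 < alpha ^+ 2 by rewrite exprn_even_gt0 // halpha0 orbT.
have p_lt_alpha2 : p%:R < alpha ^+ 2.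
  move: halpha; rewrite -sqrtr_sqr ltr_sqrt //.
  by rewrite n_eq /= -muln2 natrM mulfK.
apply: (sedentary_left_kernel (@path_weighted_sym _ _ alpha)
                              (path_kernel_left alpha hodd)).
  by rewrite hu1.
have -> : \sum_(i < n) (path_kernel alpha i - (i == u1)%:R) ^+ 2 = p%:R / alpha ^+ 2.
  rewrite -(path_kernel_dist halpha0) -n_eq big_mkord.
  by apply: eq_bigr => i _; rewrite -val_eqE /= hu1.
by rewrite ltr_pdivrMr ?mul1r.
Qed.
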